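(* Let $\mathbb{K}$ be a field. Every variety $X_{\mathbb{E}_6}(\boldsymbol{\alpha})$ (with $\boldsymbol{\alpha}$ a family of invertible elements of $\mathbb{K}$) is isomorphic to $X_{\mathbb{E}_6}(1,\dots,1)$. Every variety $X_{\mathbb{E}_7}(\boldsymbol{\alpha})$ is isomorphic to $X_{\mathbb{E}_7}(1,\dots,1,\alpha)$ for some $\alpha\in\mathbb{K}^*$, where $\alpha$ is the value on the last vertex (the leaf) of the long branch of $\mathbb{E}_7$ and all other values are $1$. Every variety $X_{\mathbb{E}_8}(\boldsymbol{\alpha})$ is isomorphic to $X_{\mathbb{E}_8}(1,\dots,1)$.
   Context: For a finite tree $T$ and a family $\boldsymbol{\alpha}=(\alpha_t)_{t\in T}$ of invertible elements of $\mathbb{K}$, $X_T(\boldsymbol{\alpha})$ is the affine variety over $\mathbb{K}$ with coordinates $x_t,x'_t$ ($t\in T$) defined by $x_tx'_t=1+\alpha_t\prod_{s-t}x_s$, the product over the neighbors $s$ of $t$. For $m=6,7,8$, $\mathbb{E}_m$ is the tree with a central vertex from which three branches (paths) emanate, containing $1$, $2$ and $m-4$ further vertices respectively; the long branch is the one with $m-4$ vertices. *)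

From HB Require Import structures.
From mathcomp Require Import all_boot all_order all_algebra.
From mathcomp Require Import mpoly.
Set Implicit Arguments. Unset Strict Implicit. Unset Printing Implicit Defensive.
Import Order.TTheory GRing.Theory Num.Theory.
Local Open Scope ring_scope.

(* Vertices of E_m are 0..m-1: 0 is the central vertex, 1 is the branch with
   one vertex, 2-3 the branch with two vertices (2 adjacent to 0), and
   4,5,...,m-1 the long branch with m-4 vertices (4 adjacent to 0, k adjacent
   to k+1); its leaf is m-1. *)
Definition E_edge0 (a b : nat) : bool :=
  [|| (a == 0%N) && (b == 1%N), (a == 0%N) && (b == 2%N),
      (a == 2%N) && (b == 3%N), (a == 0%N) && (b == 4%N)
    | (4 <= a)%N && (b == a.+1)].

Definition E_adj (m : nat) (s t : 'I_m) : bool :=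
  E_edge0 s t || E_edge0 t s.

Definition xv (K : fieldType) (m : nat) (t : 'I_m) : {mpoly K[m + m]} :=
  'X_(lshift m t).
Definition xv' (K : fieldType) (m : nat) (t : 'I_m) : {mpoly K[m + m]} :=
  'X_(rshift m t).

Definition Xrel (K : fieldType) (m : nat) (alpha : 'I_m -> K) (t : 'I_m)
  : {mpoly K[m + m]} :=
  xv K t * xv' K t - 1 - (alpha t)%:MP * \prod_(s < m | E_adj s t) xv K s.

Definition in_ideal (K : fieldType) (n m : nat) (rs : 'I_m -> {mpoly K[n]})
  (p : {mpoly K[n]}) : Prop :=
  exists c : 'I_m -> {mpoly K[n]}, p = \sum_(t < m) c t * rs t.

Definition subst (K : fieldType) (n k : nat) (phi : 'I_n -> {mpoly K[k]})
  (p : {mpoly K[n]}) : {mpoly K[k]} :=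
  comp_mpoly [tuple phi i | i < n] p.

(* K-algebra homomorphism of coordinate rings K[X]/I_beta -> K[X]/I_alpha,
   given by the images phi of the coordinates (well defined on the quotient). *)
Definition coord_hom (K : fieldType) (m : nat) (beta alpha : 'I_m -> K)
  (phi : 'I_(m + m) -> {mpoly K[m + m]}) : Prop :=
  forall t : 'I_m, in_ideal (Xrel alpha) (subst phi (Xrel beta t)).

(* Isomorphism of the affine varieties X_{E_m}(alpha) and X_{E_m}(beta):
   mutually inverse K-algebra isomorphisms of their coordinate rings
   K[x_t, x'_t] / (x_t x'_t - 1 - alpha_t prod x_s). *)
Definition X_iso (K : fieldType) (m : nat) (alpha beta : 'I_m -> K) : Prop :=
  exists (phi psi : 'I_(m + m) -> {mpoly K[m + m]}),
    [/\ coord_hom beta alpha phi,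
        coord_hom alpha beta psi,
        (forall i, in_ideal (Xrel beta) (subst psi (phi i) - 'X_i)) &
        (forall i, in_ideal (Xrel alpha) (subst phi (psi i) - 'X_i))].

(* The torus (K^×)^m acts on the family of varieties X_{E_m}(alpha): the
   substitution x_t |-> c_t x_t, x'_t |-> c_t^-1 x'_t maps X_{E_m}(alpha) to
   X_{E_m}(alpha') with alpha'_t = alpha_t * prod_{s - t} c_s.  So it suffices
   to solve prod_{s - t} c_s = alpha_t for c, i.e. to invert the adjacency
   matrix of the tree multiplicatively.  For E_6 and E_8 this matrix is
   unimodular (the trees have perfect matchings), so every alpha is reached
   from (1,...,1); E_7 has an odd number of vertices, its adjacency matrix is
   singular, and one parameter, placed on the leaf of the long branch,
   survives. *)
From HB Require Import structures.
From mathcomp Require Import all_boot all_order all_algebra.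
From mathcomp Require Import mpoly.
From mathcomp Require Import ring.
Import GRing.Theory.
Local Open Scope ring_scope.

Section TorusAction.
Variables (K : fieldType) (m : nat).

Definition torus_weight (c : 'I_m -> K) (i : 'I_(m + m)) : K :=
  match split i with inl t => c t | inr t => (c t)^-1 end.

Definition torus_subst (c : 'I_m -> K) (i : 'I_(m + m)) : {mpoly K[m + m]} :=
  torus_weight c i *: 'X_i.

Lemma torus_weight_lshift c t : torus_weight c (lshift m t) = c t.
Proof. by rewrite /torus_weight -[lshift m t]/(@unsplit m m (inl t)) unsplitK. Qed.

Lemma torus_weight_rshift c t : torus_weight c (rshift m t) = (c t)^-1.
Proof. by rewrite /torus_weight -[rshift m t]/(@unsplit m m (inr t)) unsplitK. Qed.

Lemma torus_weight_mulK c d i : (forall t, c t * d t = 1) ->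
  torus_weight d i * torus_weight c i = 1.
Proof.
move=> cd1; rewrite /torus_weight; case: split => t; rewrite mulrC.
  by rewrite cd1.
by rewrite -invfM cd1 invr1.
Qed.

Lemma subst_X n (phi : 'I_n -> {mpoly K[m + m]}) i : subst phi 'X_i = phi i.
Proof. by rewrite /subst comp_mpolyXU -tnth_nth tnth_mktuple. Qed.

Lemma subst_torusZX c a i :
  subst (torus_subst c) (a *: 'X_i) = (a * torus_weight c i) *: 'X_i.
Proof. by rewrite /subst comp_mpolyZ -/(subst _ _) subst_X scalerA. Qed.

Lemma subst_torus_Xrel c beta t : c t != 0 ->
  subst (torus_subst c) (Xrel beta t) =
  Xrel (fun u => beta u * \prod_(s < m | E_adj s u) c s) t.
Proof.
move=> ct0; rewrite /subst /Xrel !rmorphB /= rmorph1 !rmorphM /= comp_mpolyC.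
rewrite rmorph_prod /= /xv /xv' !comp_mpolyXU -!tnth_nth !tnth_mktuple.
rewrite (eq_bigr (fun s => c s *: 'X_(lshift m s))); last first.
  move=> s _; rewrite comp_mpolyXU -tnth_nth tnth_mktuple.
  by rewrite /torus_subst torus_weight_lshift.
rewrite /torus_subst torus_weight_lshift torus_weight_rshift.
rewrite scaler_prod -scalerAl -scalerAr scalerA divff // scale1r.
by rewrite -mul_mpolyC mulrA.
Qed.

Lemma in_ideal0 n (rs : 'I_m -> {mpoly K[n]}) : in_ideal rs 0.
Proof. by exists (fun _ => 0); rewrite big1 // => u _; rewrite mul0r. Qed.

Lemma in_ideal_gen n (rs : 'I_m -> {mpoly K[n]}) t : in_ideal rs (rs t).
Proof.
exists (fun u => if u == t then 1 else 0).
rewrite (bigD1 t) //= eqxx mul1r big1 ?addr0 // => u /negbTE ->.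
by rewrite mul0r.
Qed.

Lemma coord_hom_torus (alpha beta c : 'I_m -> K) : (forall t, c t != 0) ->
  (forall t, beta t * \prod_(s < m | E_adj s t) c s = alpha t) ->
  coord_hom beta alpha (torus_subst c).
Proof.
move=> c0 Ealpha t; rewrite subst_torus_Xrel // {2}/Xrel Ealpha.
exact: (@in_ideal_gen _ (Xrel alpha) t).
Qed.

Lemma torus_substK c d (alpha : 'I_m -> K) i : (forall t, c t * d t = 1) ->
  in_ideal (Xrel alpha) (subst (torus_subst c) (torus_subst d i) - 'X_i).
Proof.
move=> cd1; rewrite {1}/torus_subst subst_torusZX torus_weight_mulK //.
by rewrite scale1r subrr; exact: in_ideal0.
Qed.

Lemma X_iso_torus (alpha beta c : 'I_m -> K) : (forall t, c t != 0) ->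
  (forall t, beta t * \prod_(s < m | E_adj s t) c s = alpha t) ->
  X_iso alpha beta.
Proof.
move=> c0 Ealpha.
have cV0 t : (c t)^-1 != 0 by rewrite invr_eq0.
exists (torus_subst c), (torus_subst (fun t => (c t)^-1)); split.
- exact: coord_hom_torus.
- apply: coord_hom_torus => // t.
  rewrite -Ealpha prodfV mulfK //; exact/prodf_neq0.
- by move=> i; apply: torus_substK => t; rewrite mulVf.
- by move=> i; apply: torus_substK => t; rewrite mulfV.
Qed.

End TorusAction.

(* In each case below, c is obtained by solving prod_{s - t} c_s = alpha_t
   for t running from the leaves inwards. *)

Lemma X_iso_E6 (K : fieldType) (alpha : 'I_6 -> K) : (forall t, alpha t != 0) ->
  X_iso alpha (fun _ => 1).
Proof.
move=> alpha0; pose a k := alpha (inord k).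
have aE (t : 'I_6) : alpha t = a t by rewrite /a inord_val.
have aN0 k : (a k == 0) = false by apply/negbTE/alpha0.
pose c (t : 'I_6) :=
  nth 1 [:: a 1%N; a 0%N / (a 3%N * a 5%N); a 3%N; a 2%N / a 1%N; a 5%N; a 4%N / a 1%N] t.
apply: (@X_iso_torus _ _ _ _ c).
- by case=> [[|[|[|[|[|[|k]]]]]] Ht] //; rewrite /c /= ?(mulf_eq0, invr_eq0, aN0).
- case=> [[|[|[|[|[|[|k]]]]]] Ht] //;
    rewrite aE /= big_mkcond !big_ord_recr big_ord0 /= /c /=.
  all: by field; rewrite ?(mulf_eq0, aN0).
Qed.

Lemma X_iso_E7 (K : fieldType) (alpha : 'I_7 -> K) : (forall t, alpha t != 0) ->
  exists A : K, A != 0 /\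
    X_iso alpha (fun t : 'I_7 => if t == ord_max then A else 1).
Proof.
move=> alpha0; pose a k := alpha (inord k).
have aE (t : 'I_7) : alpha t = a t by rewrite /a inord_val.
have aN0 k : (a k == 0) = false by apply/negbTE/alpha0.
exists (a 6%N * a 1%N / a 4%N); split; first by rewrite ?(mulf_eq0, invr_eq0, aN0).
pose c (t : 'I_7) :=
  nth 1 [:: a 1%N; a 0%N / a 3%N; a 3%N; a 2%N / a 1%N; 1; a 4%N / a 1%N; a 5%N] t.
apply: (@X_iso_torus _ _ _ _ c).
- by case=> [[|[|[|[|[|[|[|k]]]]]]] Ht] //;
    rewrite /c /= ?(mulf_eq0, invr_eq0, aN0, oner_eq0).
- case=> [[|[|[|[|[|[|[|k]]]]]]] Ht] //;
    rewrite aE /= big_mkcond !big_ord_recr big_ord0 /= /c /=.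
  all: by field; rewrite ?(mulf_eq0, aN0).
Qed.

Lemma X_iso_E8 (K : fieldType) (alpha : 'I_8 -> K) : (forall t, alpha t != 0) ->
  X_iso alpha (fun _ => 1).
Proof.
move=> alpha0; pose a k := alpha (inord k).
have aE (t : 'I_8) : alpha t = a t by rewrite /a inord_val.
have aN0 k : (a k == 0) = false by apply/negbTE/alpha0.
pose c (t : 'I_8) := nth 1 [:: a 1%N; a 0%N * a 7%N / (a 3%N * a 5%N); a 3%N; a 2%N / a 1%N;
                               a 5%N / a 7%N; a 4%N / a 1%N; a 7%N; a 6%N * a 1%N / a 4%N] t.
apply: (@X_iso_torus _ _ _ _ c).
- by case=> [[|[|[|[|[|[|[|[|k]]]]]]]] Ht] //;
    rewrite /c /= ?(mulf_eq0, invr_eq0, aN0).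
- case=> [[|[|[|[|[|[|[|[|k]]]]]]]] Ht] //;
    rewrite aE /= big_mkcond !big_ord_recr big_ord0 /= /c /=.
  all: by field; rewrite ?(mulf_eq0, aN0).
Qed.

Theorem mainTheorem17 (K : fieldType) :
  [/\ (forall alpha : 'I_6 -> K, (forall t, alpha t != 0) ->
         X_iso alpha (fun _ => 1)),
      (forall alpha : 'I_7 -> K, (forall t, alpha t != 0) ->
         exists a : K, a != 0 /\
           X_iso alpha (fun t : 'I_7 => if t == ord_max then a else 1)) &
      (forall alpha : 'I_8 -> K, (forall t, alpha t != 0) ->
         X_iso alpha (fun _ => 1))].
Proof. by split; [exact: X_iso_E6 | exact: X_iso_E7 | exact: X_iso_E8]. Qed.
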